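(* Let $(Q,P)$ be a weakly quasi-lattice ordered group and let $\Lambda$ be a $P$-graph with $\mathrm{FA}(\Lambda)\neq\emptyset$. If $\lambda\in x\in\mathcal{X}(\Lambda)$, then $\lambda^*\cdot x\in\mathcal{X}(\Lambda)$.
   Context: $(Q,P)$ weakly quasi-lattice ordered: $Q$ a discrete group, $P\subseteq Q$ a subsemigroup containing the identity $e$ with $P\cap P^{-1}=\{e\}$, and, with $p\le r$ meaning $pq=r$ for some $q\in P$, any two elements of $P$ with a common upper bound have a least common upper bound. A $P$-graph is a countable small category $\Lambda$ (range/source $r,s$) with a functor $d:\Lambda\to P$ with unique factorisation (if $d(\lambda)=pq$ there are unique $\mu,\nu$ with $\lambda=\mu\nu$, $d(\mu)=p$, $d(\nu)=q$). Write $\lambda\Lambda=\{\lambda\mu: s(\lambda)=r(\mu)\}$, $\mu\preceq\lambda$ iff $\lambda\in\mu\Lambda$. $\mathrm{FA}(\Lambda)$ is the set of $\lambda$ such that for all $\mu\in\lambda\Lambda,\nu\in\Lambda$ there is finite $J\subseteq\Lambda$ with $\mu\Lambda\cap\nu\Lambda=\bigcup_{\kappa\in J}\kappa\Lambda$. A filter is a nonempty hereditary and directed subset of $\Lambda$ (w.r.t. $\preceq$). The path space is $\mathcal{X}(\Lambda)=\{x\text{ filter}: x\cap\mathrm{FA}(\Lambda)\neq\emptyset\}$. For a filter $x$ and $\lambda\in x$, $\lambda^*\cdot x=\{\mu\in\Lambda:\lambda\mu\in x\}$. *)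

From Stdlib Require Import List.
Import ListNotations.
Set Implicit Arguments.

Record Group := {
  gcar :> Type;
  gmul : gcar -> gcar -> gcar;
  gone : gcar;
  ginv : gcar -> gcar;
  gmulA : forall a b c, gmul a (gmul b c) = gmul (gmul a b) c;
  gmul1l : forall a, gmul gone a = a;
  gmul1r : forall a, gmul a gone = a;
  gmulVl : forall a, gmul (ginv a) a = gone;
  gmulVr : forall a, gmul a (ginv a) = gone
}.

Definition ple {Q : Group} (P : Q -> Prop) (p r : Q) : Prop :=
  exists q, P q /\ gmul Q p q = r.

Definition WQLO {Q : Group} (P : Q -> Prop) : Prop :=
  (forall p q, P p -> P q -> P (gmul Q p q)) /\
  P (gone Q) /\
  (forall p, P p -> P (ginv Q p) -> p = gone Q) /\
  (forall p q, P p -> P q ->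
     (exists r, P r /\ ple P p r /\ ple P q r) ->
     exists s, P s /\ ple P p s /\ ple P q s /\
       (forall r, P r -> ple P p r -> ple P q r -> ple P s r)).

(** A P-graph: a countable small category (morphisms [Mor], objects [Obj],
    composition [comp l m] meaningful when [src l = rng m]) with a degree
    functor [d] into P having the unique factorisation property. *)
Record PGraph {Q : Group} (P : Q -> Prop) := {
  Obj : Type;
  Mor : Type;
  rng : Mor -> Obj;
  src : Mor -> Obj;
  idm : Obj -> Mor;
  comp : Mor -> Mor -> Mor;
  rng_id : forall v, rng (idm v) = v;
  src_id : forall v, src (idm v) = v;
  rng_comp : forall l m, src l = rng m -> rng (comp l m) = rng l;
  src_comp : forall l m, src l = rng m -> src (comp l m) = src m;
  comp_id_l : forall l, comp (idm (rng l)) l = l;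
  comp_id_r : forall l, comp l (idm (src l)) = l;
  compA : forall l m n, src l = rng m -> src m = rng n ->
    comp l (comp m n) = comp (comp l m) n;
  obj_count : exists f : Obj -> nat, forall a b, f a = f b -> a = b;
  mor_count : exists f : Mor -> nat, forall a b, f a = f b -> a = b;
  deg : Mor -> Q;
  deg_P : forall l, P (deg l);
  deg_id : forall v, deg (idm v) = gone Q;
  deg_comp : forall l m, src l = rng m -> deg (comp l m) = gmul Q (deg l) (deg m);
  fact : forall l p q, P p -> P q -> deg l = gmul Q p q ->
    exists m n, src m = rng n /\ l = comp m n /\ deg m = p /\ deg n = q /\
      forall m' n', src m' = rng n' -> l = comp m' n' -> deg m' = p ->
        deg n' = q -> m' = m /\ n' = n
}.

Section PG.
Variables (Q : Group) (P : Q -> Prop) (L : PGraph P).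

Definition extset (l : Mor L) : Mor L -> Prop :=
  fun t => exists m, src L l = rng L m /\ t = comp L l m.

Definition prec (m l : Mor L) : Prop := extset m l.

Definition FA (l : Mor L) : Prop :=
  forall m n, extset l m ->
    exists J : list (Mor L),
      forall t, (extset m t /\ extset n t) <-> exists k, In k J /\ extset k t.

Definition is_filter (x : Mor L -> Prop) : Prop :=
  (exists l, x l) /\
  (forall m l, prec m l -> x l -> x m) /\
  (forall l m, x l -> x m -> exists n, x n /\ prec l n /\ prec m n).

Definition path_space (x : Mor L -> Prop) : Prop :=
  is_filter x /\ exists l, x l /\ FA l.

Definition star (l : Mor L) (x : Mor L -> Prop) : Mor L -> Prop :=
  fun m => src L l = rng L m /\ x (comp L l m).

End PG.

Arguments extset {Q P L} l.
Arguments prec {Q P L} m l.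
Arguments FA {Q P L} l.
Arguments is_filter {Q P L} x.
Arguments path_space {Q P L} x.
Arguments star {Q P L} l x.

(** Unique factorisation makes every path left cancellable, so [mu |-> lambda mu]
    maps [mu Lambda] bijectively onto [lambda mu Lambda].  Prefixing by
    [lambda] therefore transports filters and intersections of cylinder sets
    back and forth: [lambda^* . x] is a filter, and finite alignment of
    [lambda a] descends to [a] (an intersection of cylinders meeting
    [lambda Lambda] is covered by cylinders of paths starting with [lambda]).
    If [k] in [x] is finitely aligned, a common extension [lambda a] of
    [lambda] and [k] in [x] is finitely aligned too, so [a] is a finitely
    aligned element of [lambda^* . x]. *)
From Stdlib Require Import List Classical.
Import ListNotations.
Set Implicit Arguments.

Lemma map_preimage (A B : Type) (f : A -> B) (R : A -> Prop) (J : list B) :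
  (forall k, In k J -> exists a, R a /\ k = f a) ->
  exists J', J = map f J' /\ forall a, In a J' -> R a.
Proof.
  induction J as [|k J IH]; intro HJ.
  - exists []. split; [reflexivity | intros a []].
  - destruct (HJ k (or_introl eq_refl)) as [a [Ra ->]].
    destruct IH as [J' [-> HJ']]; [intros k' Hk'; apply HJ; now right |].
    exists (a :: J'). split; [reflexivity |].
    intros a' [<- | Ha']; auto.
Qed.

Lemma gmul_cancel_l (Q : Group) (a b c : Q) : gmul Q a b = gmul Q a c -> b = c.
Proof.
  intro E.
  rewrite <- (gmul1l Q b), <- (gmul1l Q c), <- (gmulVl Q a), <- !gmulA, E.
  reflexivity.
Qed.

Section PGraphPrefixes.
Variables (Q : Group) (P : Q -> Prop) (L : PGraph P).

Lemma comp_cancel_l {l a b : Mor L} :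
  src L l = rng L a -> src L l = rng L b -> comp L l a = comp L l b -> a = b.
Proof.
  intros Ha Hb E.
  assert (Hdeg : deg L a = deg L b).
  { apply (gmul_cancel_l Q (deg L l)).
    rewrite <- !deg_comp by assumption. now rewrite E. }
  destruct (fact L (comp L l a) _ _ (deg_P L l) (deg_P L a) (deg_comp L l a Ha))
    as [m [n [_ [_ [_ [_ Huniq]]]]]].
  destruct (Huniq l a Ha eq_refl eq_refl eq_refl) as [_ ->].
  destruct (Huniq l b Hb E eq_refl (eq_sym Hdeg)) as [_ ->].
  reflexivity.
Qed.

Lemma extset_refl (l : Mor L) : extset l l.
Proof. exists (idm L (src L l)). now rewrite rng_id, comp_id_r. Qed.

Lemma extset_rng (l t : Mor L) : extset l t -> rng L t = rng L l.
Proof. intros [a [Ha ->]]. now apply rng_comp. Qed.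

Lemma extset_trans (k l t : Mor L) : extset k l -> extset l t -> extset k t.
Proof.
  intros [a [Ha ->]] [b [Hb ->]].
  rewrite src_comp in Hb by assumption.
  exists (comp L a b). split.
  - now rewrite rng_comp.
  - symmetry. now apply compA.
Qed.

Lemma extset_comp_l {l m t : Mor L} :
  src L l = rng L m -> src L l = rng L t ->
  extset (comp L l m) (comp L l t) <-> extset m t.
Proof.
  intros Hm Ht. split.
  - intros [a [Ha E]]. rewrite src_comp in Ha by assumption.
    exists a. split; [assumption |].
    apply (@comp_cancel_l l); [assumption | now rewrite rng_comp |].
    rewrite E. symmetry. now apply compA.
  - intros [a [Ha ->]]. exists a. split.
    + now rewrite src_comp.
    + now apply compA.
Qed.

Lemma FA_extset (k l : Mor L) : extset k l -> FA k -> FA l.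
Proof.
  intros Hkl HFA m n Hlm. apply HFA. exact (extset_trans Hkl Hlm).
Qed.

Lemma extset_inter_comp_l {l m n : Mor L} {J : list (Mor L)} :
  src L l = rng L m -> src L l = rng L n ->
  (forall k, In k J -> src L l = rng L k) ->
  (forall t, extset (comp L l m) t /\ extset (comp L l n) t <->
     exists k, In k (map (comp L l) J) /\ extset k t) ->
  forall t, extset m t /\ extset n t <-> exists k, In k J /\ extset k t.
Proof.
  intros Hm Hn HJ Hinter t. split.
  - intros [Ht Ht'].
    assert (Rt : src L l = rng L t) by (now rewrite (extset_rng Ht)).
    destruct (proj1 (Hinter (comp L l t))) as [k [Hk Hkt]].
    { split; now apply extset_comp_l. }
    apply in_map_iff in Hk as [k' [<- Hk']].
    exists k'. split; [assumption |].
    now apply (extset_comp_l (HJ k' Hk') Rt).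
  - intros [k [Hk Ht]].
    assert (Rt : src L l = rng L t) by (rewrite (extset_rng Ht); now apply HJ).
    destruct (proj2 (Hinter (comp L l t))) as [Ht1 Ht2].
    { exists (comp L l k). split; [now apply in_map |].
      now apply (extset_comp_l (HJ k Hk) Rt). }
    split; [apply (extset_comp_l Hm Rt) | apply (extset_comp_l Hn Rt)];
      assumption.
Qed.

Lemma FA_comp_r {l m : Mor L} : src L l = rng L m -> FA (comp L l m) -> FA m.
Proof.
  intros Hm HFA m' nu Hm'.
  assert (Rm' : src L l = rng L m') by (rewrite (extset_rng Hm'); assumption).
  destruct (classic (src L l = rng L nu)) as [Hnu | Hnu].
  2:{ exists []. intro t. split; [| intros [k [[] _]]].
      intros [Ht Ht']. exfalso. apply Hnu.
      now rewrite Rm', <- (extset_rng Ht), (extset_rng Ht'). }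
  destruct (HFA (comp L l m') (comp L l nu)) as [J HJ].
  { now apply extset_comp_l. }
  destruct (map_preimage (comp L l) (fun k' => src L l = rng L k') J)
    as [J' [-> HJ']].
  { intros k Hk.
    destruct (proj2 (HJ k) (ex_intro _ k (conj Hk (extset_refl k))))
      as [Hk' _].
    destruct (extset_trans (ex_intro _ m' (conj Rm' eq_refl)) Hk')
      as [k' [Hsrc ->]].
    now exists k'. }
  exists J'. exact (extset_inter_comp_l Rm' Hnu HJ' HJ).
Qed.

Lemma star_is_filter (x : Mor L -> Prop) (l : Mor L) :
  is_filter x -> x l -> is_filter (star l x).
Proof.
  intros [_ [Hher Hdir]] Hl. split; [| split].
  - exists (idm L (src L l)). split.
    + now rewrite rng_id.
    + now rewrite comp_id_r.
  - intros m' m Hm'm [Hm Hxm].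
    assert (Hm' : src L l = rng L m') by (now rewrite <- (extset_rng Hm'm)).
    split; [assumption |].
    apply (Hher _ (comp L l m)); [now apply extset_comp_l | assumption].
  - intros m1 m2 [H1 X1] [H2 X2].
    destruct (Hdir _ _ X1 X2) as [n [Xn [[a [Ha En]] Hn2]]].
    rewrite src_comp in Ha by assumption.
    rewrite <- compA in En by assumption.
    subst n.
    assert (Ha' : src L l = rng L (comp L m1 a)) by (now rewrite rng_comp).
    exists (comp L m1 a). split; [split; assumption | split].
    + now exists a.
    + exact (proj1 (extset_comp_l H2 Ha') Hn2).
Qed.

Lemma star_has_FA (x : Mor L -> Prop) (l : Mor L) :
  path_space x -> x l -> exists a, star l x a /\ FA a.
Proof.
  intros [[_ [_ Hdir]] [k [Hk HFAk]]] Hl.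
  destruct (Hdir _ _ Hl Hk) as [n [Xn [[a [Ha ->]] Hkn]]].
  exists a. split; [split; assumption |].
  apply (FA_comp_r Ha). exact (FA_extset Hkn HFAk).
Qed.

End PGraphPrefixes.

Theorem lemma5p5 (Q : Group) (P : Q -> Prop) (HQP : WQLO P) (L : PGraph P)
  (HFA : exists l : Mor L, FA l)
  (x : Mor L -> Prop) (l : Mor L) :
  path_space x -> x l -> path_space (star l x).
Proof.
  intros Hx Hl. split.
  - apply star_is_filter; [apply Hx | exact Hl].
  - now apply star_has_FA.
Qed.
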